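(* Let $p\in(1,\infty)$ and let $X$ be an asymptotically $p$-uniformly smooth Banach space. There exists $c>0$ such that for all $x,y\in X$, all $\delta>0$ and every weakly null sequence $(x_n)$ in $B_X$, there is $n_0\in\mathbb N$ such that for all $n>n_0$, $u+\delta^{1/p}\|v\|x_n\in\mathrm{Mid}(x,y,c\delta)$, where $u=\frac12(x+y)$ and $v=\frac12(x-y)$.
   Context: $X$ is asymptotically $p$-uniformly smooth if $\overline\rho_X(t)\le Ct^p$ for $t\in[0,1]$ and some $C>0$, where $\overline{\rho}_X(t)=\sup_{x\in\partial B_X}\inf_{\dim(X/E)<\infty}\sup_{h\in\partial B_E}\|x+th\|-1$. For $x,y\in X$ and $\delta>0$, $\mathrm{Mid}(x,y,\delta)=\{z\in X:\max\{\|x-z\|,\|y-z\|\}\le\frac12(1+\delta)\|x-y\|\}$. *)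

From Stdlib Require Import Reals Lra List Classical ClassicalEpsilon.
Open Scope R_scope.

Record NormedSpace := {
  vec :> Type;
  vzero : vec;
  vadd : vec -> vec -> vec;
  vopp : vec -> vec;
  vscal : R -> vec -> vec;
  vnorm : vec -> R;
  vadd_assoc : forall x y z, vadd x (vadd y z) = vadd (vadd x y) z;
  vadd_comm : forall x y, vadd x y = vadd y x;
  vadd_0 : forall x, vadd x vzero = x;
  vadd_opp : forall x, vadd x (vopp x) = vzero;
  vscal_1 : forall x, vscal 1 x = x;
  vscal_assoc : forall a b x, vscal a (vscal b x) = vscal (a * b) x;
  vscal_distr_v : forall a x y, vscal a (vadd x y) = vadd (vscal a x) (vscal a y);
  vscal_distr_r : forall a b x, vscal (a + b) x = vadd (vscal a x) (vscal b x);
  vnorm_eq0 : forall x, vnorm x = 0 -> x = vzero;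
  vnorm_scal : forall a x, vnorm (vscal a x) = Rabs a * vnorm x;
  vnorm_triangle : forall x y, vnorm (vadd x y) <= vnorm x + vnorm y
}.

Arguments vzero {_}.
Arguments vadd {_}.
Arguments vopp {_}.
Arguments vscal {_}.
Arguments vnorm {_}.

Definition vsub {X : NormedSpace} (x y : X) : X := vadd x (vopp y).

Definition complete (X : NormedSpace) : Prop :=
  forall s : nat -> X,
    (forall eps, eps > 0 -> exists N, forall m n, (m >= N)%nat -> (n >= N)%nat ->
        vnorm (vsub (s m) (s n)) < eps) ->
    exists l : X, forall eps, eps > 0 -> exists N, forall n, (n >= N)%nat ->
        vnorm (vsub (s n) l) < eps.

Definition subspace {X : NormedSpace} (E : X -> Prop) : Prop :=
  E vzero /\ (forall x y, E x -> E y -> E (vadd x y)) /\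
  (forall a x, E x -> E (vscal a x)).

Fixpoint lincomb {X : NormedSpace} (cs : list R) (es : list X) : X :=
  match cs, es with
  | c :: cs', e :: es' => vadd (vscal c e) (lincomb cs' es')
  | _, _ => vzero
  end.

Definition finite_codim {X : NormedSpace} (E : X -> Prop) : Prop :=
  subspace E /\
  exists es : list X, forall x : X, exists e cs,
      E e /\ length cs = length es /\ x = vadd e (lincomb cs es).

(* Supremum / infimum of a set of reals (classical; 0 if not nonempty and
   bounded, a convention irrelevant here). *)
Definition Rsup (S : R -> Prop) : R :=
  match excluded_middle_informative (bound S /\ exists x, S x) with
  | left H => proj1_sig (completeness S (proj1 H) (proj2 H))
  | right _ => 0
  end.

Definition Rinf (S : R -> Prop) : R := - Rsup (fun r => S (- r)).

Definition asym_smooth_modulus (X : NormedSpace) (t : R) : R :=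
  Rsup (fun r => exists x : X, vnorm x = 1 /\
    r = Rinf (fun s => exists E : X -> Prop, finite_codim E /\
      s = Rsup (fun q => exists h : X, E h /\ vnorm h = 1 /\
                          q = vnorm (vadd x (vscal t h)) - 1))).

Definition rpow (t p : R) : R := if Rle_dec t 0 then 0 else Rpower t p.

Definition asym_p_unif_smooth (X : NormedSpace) (p : R) : Prop :=
  exists C, C > 0 /\
    forall t, 0 <= t <= 1 -> asym_smooth_modulus X t <= C * rpow t p.

Definition bounded_linear_functional {X : NormedSpace} (f : X -> R) : Prop :=
  (forall x y, f (vadd x y) = f x + f y) /\
  (forall a x, f (vscal a x) = a * f x) /\
  (exists M, forall x, Rabs (f x) <= M * vnorm x).

Definition weakly_null {X : NormedSpace} (s : nat -> X) : Prop :=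
  forall f : X -> R, bounded_linear_functional f -> Un_cv (fun n => f (s n)) 0.

Definition in_unit_ball {X : NormedSpace} (x : X) : Prop := vnorm x <= 1.

Definition Mid {X : NormedSpace} (x y : X) (delta : R) (z : X) : Prop :=
  Rmax (vnorm (vsub x z)) (vnorm (vsub y z)) <= / 2 * (1 + delta) * vnorm (vsub x y).

(* Put t = delta^(1/p), v = (x - y)/2 and w = v/|v|.  Then x - z and y - z are
   |v| (w - t x_n) and |v| (-w - t x_n), so it suffices that |w - t x_n| <= 1 + c t^p
   eventually, for every unit vector w.  For t <= 1 the modulus yields a subspace E of
   finite codimension with |w + t h| <= 1 + (C + 1) t^p on the unit sphere of E, hence
   on its unit ball by convexity.  A weakly null sequence eventually comes arbitrarily
   close to E: adding the finitely many complementary directions one at a time, each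
   one either lies in the closure of the others or is detected by a bounded functional
   vanishing on them, and this functional tends to 0 along the sequence.  For t > 1 the
   trivial bound 1 + t <= 1 + t^p suffices. *)

From Stdlib Require Import Reals Lra Lia List Classical ClassicalEpsilon.
Import ListNotations.
Open Scope R_scope.

Arguments vadd_assoc {_}. Arguments vadd_comm {_}. Arguments vadd_0 {_}.
Arguments vadd_opp {_}. Arguments vscal_1 {_}. Arguments vscal_assoc {_}.
Arguments vscal_distr_v {_}. Arguments vscal_distr_r {_}. Arguments vnorm_eq0 {_}.
Arguments vnorm_scal {_}. Arguments vnorm_triangle {_}.

Section VectorAlgebra.
Context {X : NormedSpace}.

Lemma vadd_0l (x : X) : vadd vzero x = x.
Proof. rewrite vadd_comm; apply vadd_0. Qed.

Lemma vadd_idem_eq0 (z : X) : vadd z z = z -> z = vzero.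
Proof.
  intros H. transitivity (vadd (vadd z z) (vopp z)).
  - rewrite <- vadd_assoc, vadd_opp, vadd_0. reflexivity.
  - rewrite H, vadd_opp. reflexivity.
Qed.

Lemma vscal_0l (x : X) : vscal 0 x = vzero.
Proof. apply vadd_idem_eq0. rewrite <- vscal_distr_r. f_equal. ring. Qed.

Lemma vscal_0r (a : R) : vscal a (@vzero X) = vzero.
Proof. rewrite <- (vscal_0l vzero), vscal_assoc, Rmult_0_r. reflexivity. Qed.

Lemma vopp_vscal (x : X) : vopp x = vscal (-1) x.
Proof.
  assert (Hx : vadd x (vscal (-1) x) = vzero).
  { rewrite <- (vscal_1 x) at 1. rewrite <- vscal_distr_r.
    replace (1 + -1) with 0 by ring. apply vscal_0l. }
  rewrite <- (vadd_0 (vscal (-1) x)), <- (vadd_opp x), vadd_assoc,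
    (vadd_comm _ x), Hx, vadd_0l. reflexivity.
Qed.

Lemma vadd_addACA (a b c d : X) :
  vadd (vadd a b) (vadd c d) = vadd (vadd a c) (vadd b d).
Proof.
  rewrite <- !vadd_assoc. f_equal. rewrite !vadd_assoc. f_equal. apply vadd_comm.
Qed.

End VectorAlgebra.

(* Reflexive decision of linear identities: a term over atoms [VVar i] is
   normalised to its list of coefficients on the atoms. *)
Inductive vterm :=
  | VVar (i : nat) | VZero | VAdd (a b : vterm) | VOpp (a : vterm) | VScal (r : R) (a : vterm).

Fixpoint vterm_eval {X : NormedSpace} (env : list X) (t : vterm) : X :=
  match t with
  | VVar i => nth i env vzero
  | VZero => vzero
  | VAdd a b => vadd (vterm_eval env a) (vterm_eval env b)
  | VOpp a => vopp (vterm_eval env a)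
  | VScal r a => vscal r (vterm_eval env a)
  end.

Fixpoint coeffs_unit (i : nat) : list R :=
  match i with O => [1] | S i => 0 :: coeffs_unit i end.

Fixpoint coeffs_add (l1 l2 : list R) : list R :=
  match l1, l2 with
  | [], l => l
  | l, [] => l
  | a :: l1', b :: l2' => (a + b) :: coeffs_add l1' l2'
  end.

Fixpoint vterm_coeffs (t : vterm) : list R :=
  match t with
  | VVar i => coeffs_unit i
  | VZero => []
  | VAdd a b => coeffs_add (vterm_coeffs a) (vterm_coeffs b)
  | VOpp a => map (Rmult (-1)) (vterm_coeffs a)
  | VScal r a => map (Rmult r) (vterm_coeffs a)
  end.

Fixpoint coeffs_pad (n : nat) (l : list R) : list R :=
  match n with
  | O => []
  | S n' => match l with [] => 0 :: coeffs_pad n' [] | a :: l' => a :: coeffs_pad n' l' end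
  end.

Section VtermCorrect.
Context {X : NormedSpace}.

Lemma lincomb_nil (env : list X) : lincomb [] env = vzero.
Proof. destruct env; reflexivity. Qed.

Lemma lincomb_unit (i : nat) (env : list X) : lincomb (coeffs_unit i) env = nth i env vzero.
Proof.
  revert env; induction i; intros [|e env]; simpl; auto.
  - rewrite vadd_0, vscal_1. reflexivity.
  - rewrite IHi, vscal_0l, vadd_0l. reflexivity.
Qed.

Lemma lincomb_add (l1 l2 : list R) (env : list X) :
  lincomb (coeffs_add l1 l2) env = vadd (lincomb l1 env) (lincomb l2 env).
Proof.
  revert l2 env; induction l1 as [|a l1 IH]; intros [|b l2] [|e env]; simpl;
    try rewrite lincomb_nil; try rewrite vadd_0l; try rewrite vadd_0; auto.
  rewrite IH, vscal_distr_r. apply vadd_addACA.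
Qed.

Lemma lincomb_map_mult (r : R) (l : list R) (env : list X) :
  lincomb (map (Rmult r) l) env = vscal r (lincomb l env).
Proof.
  revert env; induction l as [|a l IH]; intros [|e env]; simpl;
    try rewrite vscal_0r; auto.
  rewrite IH, vscal_distr_v, vscal_assoc. reflexivity.
Qed.

Lemma vterm_eval_coeffs (env : list X) (t : vterm) :
  vterm_eval env t = lincomb (vterm_coeffs t) env.
Proof.
  induction t; simpl.
  - symmetry; apply lincomb_unit.
  - reflexivity.
  - rewrite lincomb_add, IHt1, IHt2; reflexivity.
  - rewrite lincomb_map_mult, IHt, vopp_vscal; reflexivity.
  - rewrite lincomb_map_mult, IHt; reflexivity.
Qed.

Lemma lincomb_pad (l : list R) (env : list X) :
  lincomb l env = lincomb (coeffs_pad (length env) l) env.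
Proof.
  revert l; induction env as [|e env IH]; intros [|a l]; simpl; auto.
  - rewrite <- IH, lincomb_nil, vscal_0l, vadd_0. reflexivity.
  - rewrite <- IH. reflexivity.
Qed.

Lemma vterm_eval_eq (env : list X) (ta tb : vterm) :
  Forall2 eq (coeffs_pad (length env) (vterm_coeffs ta))
             (coeffs_pad (length env) (vterm_coeffs tb)) ->
  vterm_eval env ta = vterm_eval env tb.
Proof.
  intros H. rewrite !vterm_eval_coeffs, (lincomb_pad (vterm_coeffs ta)),
    (lincomb_pad (vterm_coeffs tb)).
  f_equal. induction H; congruence.
Qed.

End VtermCorrect.

Ltac vterm_index a env :=
  lazymatch env with
  | (a :: _) => constr:(O)
  | (_ :: ?env') => let i := vterm_index a env' in constr:(S i)
  end.

Ltac vterm_reify env e :=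
  lazymatch e with
  | vzero => constr:(VZero)
  | vadd ?a ?b =>
      let ta := vterm_reify env a in let tb := vterm_reify env b in constr:(VAdd ta tb)
  | vsub ?a ?b =>
      let ta := vterm_reify env a in let tb := vterm_reify env b in constr:(VAdd ta (VOpp tb))
  | vopp ?a => let ta := vterm_reify env a in constr:(VOpp ta)
  | vscal ?r ?a => let ta := vterm_reify env a in constr:(VScal r ta)
  | _ => let i := vterm_index e env in constr:(VVar i)
  end.

(* [vring env] proves an identity between linear expressions in the vectors of
   [env]; coefficient equations that [ring]/[field] cannot close are left over. *)
Ltac vring env :=
  lazymatch goal with
  | |- ?A = ?B =>
    let ta := vterm_reify env A in let tb := vterm_reify env B in
    change (vterm_eval env ta = vterm_eval env tb);
    apply vterm_eval_eq; simpl;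
    repeat apply Forall2_cons; try apply Forall2_nil; try solve [ring | field]
  end.

Lemma Rabs_m1 : Rabs (-1) = 1.
Proof. unfold Rabs; destruct Rcase_abs; lra. Qed.

Section Norms.
Context {X : NormedSpace}.

Lemma vnorm_zero : vnorm (@vzero X) = 0.
Proof. rewrite <- (vscal_0l (@vzero X)), vnorm_scal, Rabs_R0. ring. Qed.

Lemma vnorm_ge0 (x : X) : 0 <= vnorm x.
Proof.
  pose proof (vnorm_triangle x (vscal (-1) x)) as Htri.
  replace (vadd x (vscal (-1) x)) with (@vzero X) in Htri by vring [x].
  rewrite vnorm_zero, vnorm_scal, Rabs_m1 in Htri. lra.
Qed.

Lemma vnorm_opp_scal (x : X) : vnorm (vscal (-1) x) = vnorm x.
Proof. rewrite vnorm_scal, Rabs_m1. ring. Qed.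

Lemma vnorm_subC (a b : X) : vnorm (vsub a b) = vnorm (vsub b a).
Proof. replace (vsub b a) with (vscal (-1) (vsub a b)) by vring [a; b].
  symmetry; apply vnorm_opp_scal. Qed.

Lemma vnorm_sub_triangle (a b c : X) :
  vnorm (vsub a c) <= vnorm (vsub a b) + vnorm (vsub b c).
Proof.
  replace (vsub a c) with (vadd (vsub a b) (vsub b c)) by vring [a; b; c].
  apply vnorm_triangle.
Qed.

Lemma vnorm_le_sub (a b : X) : vnorm a <= vnorm b + vnorm (vsub a b).
Proof. replace a with (vadd b (vsub a b)) at 1 by vring [a; b]. apply vnorm_triangle. Qed.

End Norms.

Lemma Rsup_lub (S : R -> Prop) : bound S -> (exists x, S x) -> is_lub S (Rsup S).
Proof.
  intros Hb Hn. unfold Rsup. destruct excluded_middle_informative as [H|H].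
  - destruct (completeness S (proj1 H) (proj2 H)) as [m Hm]; exact Hm.
  - exfalso; tauto.
Qed.

Lemma Rsup_ge (S : R -> Prop) (r : R) : bound S -> S r -> r <= Rsup S.
Proof. intros Hb Hr. apply (Rsup_lub S Hb (ex_intro _ r Hr)), Hr. Qed.

(* The hypothesis [0 <= M] covers the junk value [Rsup S = 0] of an unbounded [S]. *)
Lemma Rsup_le (S : R -> Prop) (M : R) : 0 <= M -> (forall r, S r -> r <= M) -> Rsup S <= M.
Proof.
  intros HM H. unfold Rsup. destruct excluded_middle_informative as [H'|H'].
  - destruct (completeness S (proj1 H') (proj2 H')) as [m Hm]; simpl. apply Hm. exact H.
  - exact HM.
Qed.

Lemma Rinf_le (S : R -> Prop) (s M : R) : S s -> s <= M -> 0 <= M -> Rinf S <= M.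
Proof.
  intros Hs HsM HM. unfold Rinf, Rsup. destruct excluded_middle_informative as [H|H].
  - destruct (completeness _ (proj1 H) (proj2 H)) as [m Hm].
    assert (-s <= m) by (apply Hm; rewrite Ropp_involutive; exact Hs). simpl. lra.
  - lra.
Qed.

Lemma Rinf_approx (S : R -> Prop) (M eps : R) :
  (exists s, S s) -> Rinf S <= M -> eps > 0 -> exists s, S s /\ s < M + eps.
Proof.
  intros [s0 Hs0] HI He. apply NNPP; intros Hno.
  assert (Hall : forall s, S s -> M + eps <= s).
  { intros s Hs. apply Rnot_lt_le. intros Hlt. apply Hno. exists s; auto. }
  assert (Hb : bound (fun r => S (- r))).
  { exists (-(M+eps)). intros r Hr. apply Hall in Hr. lra. }
  assert (Hne : exists r, S (- r)) by (exists (-s0); rewrite Ropp_involutive; exact Hs0).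
  assert (Rsup (fun r => S (- r)) <= -(M+eps)).
  { apply (Rsup_lub _ Hb Hne). intros r Hr. apply Hall in Hr. lra. }
  unfold Rinf in HI. lra.
Qed.

Lemma Rabs_le_iff (x a : R) : Rabs x <= a <-> -a <= x <= a.
Proof. unfold Rabs; destruct Rcase_abs; split; intros; lra. Qed.

Lemma eq0_of_Rabs_le_small (r K : R) :
  0 <= K -> (forall eta, eta > 0 -> Rabs r <= K * eta) -> r = 0.
Proof.
  intros HK H. destruct (Req_dec r 0) as [|Hr]; auto. exfalso.
  assert (Ha : Rabs r > 0) by (apply Rabs_pos_lt; auto).
  specialize (H (Rabs r / (K + 1)) ltac:(apply Rdiv_lt_0_compat; lra)).
  assert (K * (Rabs r / (K + 1)) < Rabs r).
  { unfold Rdiv. rewrite <- Rmult_assoc. apply (Rmult_lt_reg_r (K+1)); [lra|].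
    rewrite Rmult_assoc, Rinv_l by lra. nra. }
  lra.
Qed.

Section Subspaces.
Context {X : NormedSpace}.

Definition near (S : X -> Prop) (x : X) (eta : R) : Prop :=
  exists e, S e /\ vnorm (vsub x e) < eta.

Definition dense (S : X -> Prop) : Prop := forall x eta, eta > 0 -> near S x eta.

Definition line_sum (S : X -> Prop) (e : X) (z : X) : Prop :=
  exists c y, S y /\ z = vadd (vscal c e) y.

Fixpoint span_sum (S : X -> Prop) (l : list X) : X -> Prop :=
  match l with
  | [] => S
  | e :: l' => line_sum (span_sum S l') e
  end.

Lemma near_le (S : X -> Prop) x a b : near S x a -> a <= b -> near S x b.
Proof. intros [e [He Hx]] Hab. exists e; split; [exact He | lra]. Qed.

Lemma line_sum_subspace (S : X -> Prop) e : subspace S -> subspace (line_sum S e).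
Proof.
  intros [S0 [Sadd Sscal]]. split; [|split].
  - exists 0, vzero. split; auto. vring [e].
  - intros x y [c [u [Hu ->]]] [c' [u' [Hu' ->]]]. exists (c + c'), (vadd u u').
    split; auto. vring [e; u; u'].
  - intros r x [c [u [Hu ->]]]. exists (r * c), (vscal r u). split; auto. vring [e; u].
Qed.

Lemma span_sum_subspace (S : X -> Prop) l : subspace S -> subspace (span_sum S l).
Proof. intros HS. induction l; simpl; auto using line_sum_subspace. Qed.

Lemma span_sum_incl (S : X -> Prop) l x : S x -> span_sum S l x.
Proof.
  intros H. induction l as [|a l IH]; simpl; auto.
  exists 0, x. split; auto. vring [a; x].
Qed.

Lemma line_sum_span_sum (S : X -> Prop) e l x :
  line_sum (span_sum S l) e x -> span_sum (line_sum S e) l x.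
Proof.
  revert x; induction l as [|a l IH]; intros x [c [y [Hy ->]]]; simpl in *.
  - exists c, y; auto.
  - destruct Hy as [c' [y' [Hy' ->]]]. exists c', (vadd (vscal c e) y'). split.
    + apply IH. exists c, y'; auto.
    + vring [a; e; y'].
Qed.

Lemma lincomb_span_sum (S : X -> Prop) es cs e :
  S e -> span_sum S es (vadd e (lincomb cs es)).
Proof.
  revert cs e; induction es as [|a es IH]; intros cs e He; simpl.
  - destruct cs; simpl; rewrite vadd_0; auto.
  - destruct cs as [|c cs]; simpl.
    + exists 0, e. split; [exact (span_sum_incl S es e He) | vring [a; e]].
    + exists c, (vadd e (lincomb cs es)). split; auto. vring [a; e; lincomb cs es].
Qed.

Lemma finite_codim_dense_span (E : X -> Prop) :
  finite_codim E -> exists es, dense (span_sum E es).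
Proof.
  intros [_ [es Hes]]. exists es. intros x eta Heta.
  destruct (Hes x) as [e [cs [He [_ Hx]]]]. exists x. split.
  - rewrite Hx. apply lincomb_span_sum, He.
  - replace (vsub x x) with (@vzero X) by vring [x]. rewrite vnorm_zero; lra.
Qed.

End Subspaces.

Section DenseExtension.
Context {X : NormedSpace} (D : X -> Prop) (f : X -> R) (L : R).
Hypotheses (HD : subspace D) (HDdense : dense D) (HL : 0 <= L)
  (Hlip : forall x y, Rabs (f x - f y) <= L * vnorm (vsub x y))
  (Hadd : forall x y, D x -> D y -> f (vadd x y) = f x + f y)
  (Hscal : forall a x, D x -> f (vscal a x) = a * f x).

Lemma dense_lipschitz_additive x y : f (vadd x y) = f x + f y.
Proof.
  destruct HD as [_ [Dadd _]].
  apply Rminus_diag_uniq, (eq0_of_Rabs_le_small _ (4 * L)); [lra|]. intros eta Heta.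
  destruct (HDdense x eta Heta) as [dx [Hdx Hx]].
  destruct (HDdense y eta Heta) as [dy [Hdy Hy]].
  pose proof (Hlip (vadd x y) (vadd dx dy)) as Pxy.
  pose proof (Hlip x dx) as Px. pose proof (Hlip y dy) as Py.
  rewrite (Hadd dx dy Hdx Hdy) in Pxy.
  assert (Hsum : vnorm (vsub (vadd x y) (vadd dx dy)) <= 2 * eta).
  { replace (vsub (vadd x y) (vadd dx dy)) with (vadd (vsub x dx) (vsub y dy))
      by vring [x; y; dx; dy].
    pose proof (vnorm_triangle (vsub x dx) (vsub y dy)). lra. }
  apply Rabs_le_iff in Pxy; apply Rabs_le_iff in Px; apply Rabs_le_iff in Py.
  apply Rabs_le_iff. nra.
Qed.

Lemma dense_lipschitz_homogeneous a x : f (vscal a x) = a * f x.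
Proof.
  apply Rminus_diag_uniq, (eq0_of_Rabs_le_small _ (2 * L * Rabs a));
    [pose proof (Rabs_pos a); nra|]. intros eta Heta.
  destruct (HDdense x eta Heta) as [dx [Hdx Hx]].
  pose proof (Hlip (vscal a x) (vscal a dx)) as Pa. pose proof (Hlip x dx) as Px.
  rewrite (Hscal a dx Hdx) in Pa.
  replace (vsub (vscal a x) (vscal a dx)) with (vscal a (vsub x dx)) in Pa by vring [x; dx].
  rewrite vnorm_scal in Pa.
  replace (f (vscal a x) - a * f x) with ((f (vscal a x) - a * f dx) - a * (f x - f dx)) by ring.
  eapply Rle_trans; [apply Rabs_triang|]. rewrite Rabs_Ropp, Rabs_mult.
  pose proof (Rabs_pos a). pose proof (vnorm_ge0 (vsub x dx)).
  assert (Rabs a * Rabs (f x - f dx) <= Rabs a * (L * eta)) by (apply Rmult_le_compat_l; nra).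
  assert (L * (Rabs a * vnorm (vsub x dx)) <= L * (Rabs a * eta))
    by (apply Rmult_le_compat_l; [|apply Rmult_le_compat_l]; lra).
  lra.
Qed.

Lemma dense_lipschitz_bounded_linear : bounded_linear_functional f.
Proof.
  split; [exact dense_lipschitz_additive | split; [exact dense_lipschitz_homogeneous|]].
  exists L. intros x. pose proof (Hlip x vzero) as Hx.
  replace (vsub x vzero) with x in Hx by vring [x].
  replace (f vzero) with 0 in Hx
    by (rewrite <- (vscal_0l (@vzero X)), dense_lipschitz_homogeneous; ring).
  rewrite Rminus_0_r in Hx. exact Hx.
Qed.

End DenseExtension.

Section SeparatingFunctional.
Context {X : NormedSpace} (G : X -> Prop) (e : X) (d : R).
Hypotheses (HG : subspace G) (Hd : 0 < d) (Hdist : forall g, G g -> d <= vnorm (vsub e g)).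

Lemma line_coeff_bound b g : G g -> Rabs b * d <= vnorm (vadd (vscal b e) g).
Proof.
  intros Hg. destruct HG as [_ [_ Gscal]]. destruct (Req_dec b 0) as [->|Hb].
  - rewrite Rabs_R0, Rmult_0_l. apply vnorm_ge0.
  - replace (vadd (vscal b e) g) with (vscal b (vsub e (vscal (- / b) g)))
      by (vring [e; g]; field; auto).
    rewrite vnorm_scal. apply Rmult_le_compat_l; [apply Rabs_pos|]. apply Hdist, Gscal, Hg.
Qed.

Lemma line_coeff_le b g : G g -> b <= / d * vnorm (vadd (vscal b e) g).
Proof.
  intros Hg. pose proof (line_coeff_bound b g Hg). pose proof (RRle_abs b).
  apply (Rmult_le_reg_r d); [exact Hd|].
  replace (/ d * vnorm (vadd (vscal b e) g) * d) with (vnorm (vadd (vscal b e) g))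
    by (field; lra).
  nra.
Qed.

(* McShane extension of the coefficient [a e + g |-> a], which is [/d]-Lipschitz. *)
Definition coeff_lower_set (x : X) (r : R) : Prop :=
  exists a g, G g /\ r = a - / d * vnorm (vsub x (vadd (vscal a e) g)).

Definition line_coeff (x : X) : R := Rsup (coeff_lower_set x).

Lemma line_coeff_lub x : is_lub (coeff_lower_set x) (line_coeff x).
Proof.
  apply Rsup_lub.
  - exists (/ d * vnorm x). intros r [a [g [Hg ->]]].
    pose proof (line_coeff_le a g Hg).
    pose proof (vnorm_le_sub (vadd (vscal a e) g) x) as Htri. rewrite (vnorm_subC _ x) in Htri.
    assert (/ d > 0) by (apply Rinv_0_lt_compat; lra). nra.
  - exists (0 - / d * vnorm (vsub x (vadd (vscal 0 e) vzero))).
    exists 0, vzero. split; [apply HG | reflexivity].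
Qed.

Lemma line_coeff_line a g : G g -> line_coeff (vadd (vscal a e) g) = a.
Proof.
  intros Hg. destruct HG as [_ [Gadd Gscal]]. apply Rle_antisym.
  - apply (line_coeff_lub _). intros r [a' [g' [Hg' ->]]].
    assert (Hgg : G (vadd g' (vscal (-1) g))) by auto.
    pose proof (line_coeff_le (a' - a) _ Hgg) as U.
    replace (vadd (vscal (a' - a) e) (vadd g' (vscal (-1) g)))
      with (vsub (vadd (vscal a' e) g') (vadd (vscal a e) g)) in U by vring [e; g; g'].
    rewrite vnorm_subC in U. lra.
  - apply (line_coeff_lub _). exists a, g. split; auto.
    replace (vsub (vadd (vscal a e) g) (vadd (vscal a e) g)) with (@vzero X) by vring [e; g].
    rewrite vnorm_zero. ring.
Qed.

Lemma line_coeff_lipschitz x y : Rabs (line_coeff x - line_coeff y) <= / d * vnorm (vsub x y).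
Proof.
  assert (Hle : forall x y, line_coeff x <= line_coeff y + / d * vnorm (vsub x y)).
  { clear x y. intros x y. apply (line_coeff_lub x). intros r [a [g [Hg ->]]].
    assert (a - / d * vnorm (vsub y (vadd (vscal a e) g)) <= line_coeff y)
      by (apply (line_coeff_lub y); exists a, g; auto).
    pose proof (vnorm_sub_triangle y x (vadd (vscal a e) g)) as Htri.
    rewrite (vnorm_subC y x) in Htri.
    assert (/ d > 0) by (apply Rinv_0_lt_compat; lra). nra. }
  apply Rabs_le_iff. pose proof (Hle x y). pose proof (Hle y x).
  rewrite vnorm_subC in H0. lra.
Qed.

Lemma separating_functional :
  dense (line_sum G e) ->
  exists phi : X -> R, bounded_linear_functional phi /\ phi e = 1 /\
    (forall g, G g -> phi g = 0).
Proof.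
  intros Hdense. destruct HG as [G0 [Gadd Gscal]].
  assert (Hline : forall z, line_sum G e z -> exists a g, G g /\ z = vadd (vscal a e) g /\
                   line_coeff z = a).
  { intros z [a [g [Hg ->]]]. exists a, g. auto using line_coeff_line. }
  exists line_coeff. split; [|split].
  - apply (dense_lipschitz_bounded_linear (line_sum G e) _ (/ d)).
    + apply line_sum_subspace, HG.
    + exact Hdense.
    + left; apply Rinv_0_lt_compat, Hd.
    + exact line_coeff_lipschitz.
    + intros x y Hx Hy. destruct (Hline x Hx) as [a [g [Hg [-> ->]]]].
      destruct (Hline y Hy) as [b [h [Hh [-> ->]]]].
      replace (vadd (vadd (vscal a e) g) (vadd (vscal b e) h))
        with (vadd (vscal (a + b) e) (vadd g h)) by vring [e; g; h].
      apply line_coeff_line; auto.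
    + intros r x Hx. destruct (Hline x Hx) as [a [g [Hg [-> ->]]]].
      replace (vscal r (vadd (vscal a e) g)) with (vadd (vscal (r * a) e) (vscal r g))
        by vring [e; g].
      apply line_coeff_line; auto.
  - replace e with (vadd (vscal 1 e) (@vzero X)) at 1 by vring [e]. apply line_coeff_line, G0.
  - intros g Hg. replace g with (vadd (vscal 0 e) g) at 1 by vring [e; g].
    apply line_coeff_line, Hg.
Qed.

End SeparatingFunctional.

Definition eventually (P : nat -> Prop) : Prop := exists N, forall n, (N <= n)%nat -> P n.

Lemma eventually_and (P Q : nat -> Prop) :
  eventually P -> eventually Q -> eventually (fun n => P n /\ Q n).
Proof.
  intros [N1 H1] [N2 H2]. exists (max N1 N2). intros n Hn. split; [apply H1 | apply H2]; lia.
Qed.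

Lemma eventually_mono (P Q : nat -> Prop) :
  (forall n, P n -> Q n) -> eventually P -> eventually Q.
Proof. intros HPQ [N H]. exists N. auto. Qed.

Section WeaklyNull.
Context {X : NormedSpace}.

Lemma weakly_null_eventually_small (xs : nat -> X) phi eps :
  weakly_null xs -> bounded_linear_functional phi -> eps > 0 ->
  eventually (fun n => Rabs (phi (xs n)) < eps).
Proof.
  intros Hwn Hphi Heps. destruct (Hwn phi Hphi eps Heps) as [N HN]. exists N.
  intros n Hn. specialize (HN n Hn). unfold R_dist in HN. rewrite Rminus_0_r in HN. exact HN.
Qed.

Lemma dense_of_closure_line (G : X -> Prop) e :
  subspace G -> dense (line_sum G e) -> (forall eta, eta > 0 -> near G e eta) -> dense G.
Proof.
  intros [_ [Gadd Gscal]] Hdense Hcl x eta Heta.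
  destruct (Hdense x (eta / 2) ltac:(lra)) as [z [[c [y [Hy ->]]] Hz]].
  assert (Hc : 0 <= Rabs c) by apply Rabs_pos.
  destruct (Hcl (eta / (2 * (Rabs c + 1)))) as [g [Hg Hgn]].
  { apply Rdiv_lt_0_compat; lra. }
  exists (vadd (vscal c g) y). split; [auto|].
  pose proof (vnorm_sub_triangle x (vadd (vscal c e) y) (vadd (vscal c g) y)) as Htri.
  replace (vsub (vadd (vscal c e) y) (vadd (vscal c g) y)) with (vscal c (vsub e g))
    in Htri by vring [e; y; g].
  rewrite vnorm_scal in Htri.
  assert (Rabs c * vnorm (vsub e g) <= (Rabs c + 1) * (eta / (2 * (Rabs c + 1))))
    by (pose proof (vnorm_ge0 (vsub e g)); apply Rmult_le_compat; lra).
  replace ((Rabs c + 1) * (eta / (2 * (Rabs c + 1)))) with (eta / 2) in H by (field; lra).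
  lra.
Qed.

(* The coefficient of [x] along [e] is read off by [phi], up to the error of approximation. *)
Lemma near_of_near_line_sum (E : X -> Prop) e phi M x r :
  (forall x y, phi (vadd x y) = phi x + phi y) -> (forall a x, phi (vscal a x) = a * phi x) ->
  (forall x, Rabs (phi x) <= M * vnorm x) -> phi e = 1 -> (forall y, E y -> phi y = 0) ->
  near (line_sum E e) x r -> near E x (r + (Rabs (phi x) + M * r) * vnorm e).
Proof.
  intros Padd Pscal HM Pe PE [z [[c [y [Hy ->]]] Hz]].
  assert (HM0 : 0 <= M).
  { pose proof (HM e) as He. rewrite Pe, Rabs_R1 in He. pose proof (vnorm_ge0 e). nra. }
  set (w := vsub x (vadd (vscal c e) y)) in *.
  assert (Hc : c = phi x - phi w).
  { replace x with (vadd w (vadd (vscal c e) y)) at 1 by (unfold w; vring [x; e; y]).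
    rewrite !Padd, Pscal, Pe, (PE y Hy). ring. }
  assert (Hcr : Rabs c <= Rabs (phi x) + M * r).
  { rewrite Hc. unfold Rminus. eapply Rle_trans; [apply Rabs_triang|]. rewrite Rabs_Ropp.
    pose proof (HM w). assert (M * vnorm w <= M * r) by (apply Rmult_le_compat_l; lra).
    lra. }
  exists y. split; [exact Hy|].
  pose proof (vnorm_sub_triangle x (vadd (vscal c e) y) y) as Htri.
  replace (vsub (vadd (vscal c e) y) y) with (vscal c e) in Htri by vring [e; y].
  rewrite vnorm_scal in Htri.
  assert (Rabs c * vnorm e <= (Rabs (phi x) + M * r) * vnorm e)
    by (apply Rmult_le_compat_r; [apply vnorm_ge0 | exact Hcr]).
  fold w in Htri. lra.
Qed.

Lemma weakly_null_eventually_near (l : list X) : forall E : X -> Prop,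
  subspace E -> dense (span_sum E l) ->
  forall xs : nat -> X, weakly_null xs ->
  forall eps, eps > 0 -> eventually (fun n => near E (xs n) eps).
Proof.
  induction l as [|e l IH]; intros E HE Hdense xs Hwn eps Heps.
  { exists O. intros n _. apply Hdense, Heps. }
  set (G := span_sum E l). assert (HG : subspace G) by (apply span_sum_subspace, HE).
  destruct (classic (forall eta, eta > 0 -> near G e eta)) as [Hcl|Hncl].
  { apply IH; auto. apply (dense_of_closure_line _ e); auto. }
  apply not_all_ex_not in Hncl. destruct Hncl as [d Hd].
  apply imply_to_and in Hd. destruct Hd as [Hd Hnear].
  assert (Hdist : forall g, G g -> d <= vnorm (vsub e g)).
  { intros g Hg. apply Rnot_lt_le. intros Hlt. apply Hnear. exists g; auto. }
  destruct (separating_functional G e d HG Hd Hdist Hdense) as [phi [Hphi [Pe PG]]].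
  assert (PE : forall y, E y -> phi y = 0) by (intros y Hy; apply PG, span_sum_incl, Hy).
  assert (Hsmall : forall eta, eta > 0 -> eventually (fun n => Rabs (phi (xs n)) < eta))
    by (intros; apply weakly_null_eventually_small; auto).
  destruct Hphi as [Padd [Pscal [M HM]]].
  set (K := (1 + Rabs M) * (vnorm e + 1)).
  assert (HK : 1 <= K)
    by (pose proof (Rabs_pos M); pose proof (vnorm_ge0 e); unfold K; nra).
  set (eta := eps / K).
  assert (Heta : eta > 0) by (unfold eta; apply Rdiv_lt_0_compat; lra).
  assert (Hline : eventually (fun n => near (line_sum E e) (xs n) eta)).
  { apply IH; auto using line_sum_subspace.
    intros x r Hr. destruct (Hdense x r Hr) as [z [Hz Hzr]].
    exists z. split; [apply line_sum_span_sum, Hz | exact Hzr]. }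
  apply (eventually_mono _ _) with (2 := eventually_and _ _ Hline (Hsmall eta Heta)).
  intros n [Hn Hphin].
  apply (near_le _ _ _ _ (near_of_near_line_sum E e phi M (xs n) eta Padd Pscal HM Pe PE Hn)).
  assert (Rabs (phi (xs n)) + M * eta <= (1 + Rabs M) * eta)
    by (pose proof (RRle_abs M); nra).
  assert ((Rabs (phi (xs n)) + M * eta) * vnorm e <= (1 + Rabs M) * eta * vnorm e)
    by (apply Rmult_le_compat_r; [apply vnorm_ge0 | lra]).
  replace eps with (K * eta) by (unfold eta; field; lra).
  unfold K. pose proof (Rabs_pos M). nra.
Qed.

End WeaklyNull.

Section Modulus.
Context {X : NormedSpace} (t : R).
Hypothesis Ht : 0 <= t.

Definition sphere_excess (x : X) (E : X -> Prop) (q : R) : Prop :=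
  exists h, E h /\ vnorm h = 1 /\ q = vnorm (vadd x (vscal t h)) - 1.

Lemma sphere_excess_le x E q : vnorm x = 1 -> sphere_excess x E q -> q <= t.
Proof.
  intros Hx [h [_ [Hh ->]]]. pose proof (vnorm_triangle x (vscal t h)) as Htri.
  rewrite vnorm_scal, Hh, Rabs_pos_eq in Htri by exact Ht. lra.
Qed.

Lemma finite_codim_full : finite_codim (fun _ : X => True).
Proof.
  split; [split; [|split]; auto|]. exists []. intros x. exists x, [].
  split; [|split]; auto. simpl. rewrite vadd_0. reflexivity.
Qed.

Lemma asym_modulus_witness (w : X) M eps :
  vnorm w = 1 -> asym_smooth_modulus X t <= M -> eps > 0 ->
  exists E, finite_codim E /\
    forall h, E h -> vnorm h = 1 -> vnorm (vadd w (vscal t h)) <= 1 + M + eps.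
Proof.
  intros Hw HM Heps.
  set (inf_excess := fun x : X => Rinf (fun s => exists E : X -> Prop, finite_codim E /\
                                          s = Rsup (sphere_excess x E))).
  assert (Hinf : forall x : X, vnorm x = 1 -> inf_excess x <= t).
  { intros x Hx. eapply Rinf_le;
      [exists (fun _ => True); split; [exact finite_codim_full | reflexivity] | | exact Ht].
    apply Rsup_le; [exact Ht|]. intros q Hq. apply (sphere_excess_le x _ q Hx Hq). }
  assert (Hw_le : inf_excess w <= M).
  { eapply Rle_trans; [|exact HM]. apply Rsup_ge.
    - exists t. intros r [x [Hx ->]]. apply Hinf, Hx.
    - exists w. split; [exact Hw | reflexivity]. }
  destruct (Rinf_approx _ _ eps (ex_intro _ _ (ex_intro _ _ (conj finite_codim_full eq_refl)))
              Hw_le Heps) as [s [[E [HE ->]] Hs]].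
  exists E. split; [exact HE|]. intros h Hh Hh1.
  assert (vnorm (vadd w (vscal t h)) - 1 <= Rsup (sphere_excess w E)).
  { apply Rsup_ge; [exists t; intros q; apply sphere_excess_le, Hw | exists h; auto]. }
  lra.
Qed.

End Modulus.

Section UnitBall.
Context {X : NormedSpace} (E : X -> Prop).
Hypothesis HE : subspace E.

Lemma ball_bound_of_sphere_bound (w : X) t B :
  vnorm w <= B -> (forall k, E k -> vnorm k = 1 -> vnorm (vadd w (vscal t k)) <= B) ->
  forall h, E h -> vnorm h <= 1 -> vnorm (vadd w (vscal t h)) <= B.
Proof.
  destruct HE as [_ [_ Escal]]. intros Hw Hsphere h Hh Hh1.
  pose proof (vnorm_ge0 h) as Hla. set (la := vnorm h) in *.
  destruct (Req_dec la 0) as [Hla0|Hla0].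
  { apply vnorm_eq0 in Hla0. subst h. replace (vadd w (vscal t vzero)) with w by vring [w].
    exact Hw. }
  assert (Hla_pos : 0 < la) by lra.
  set (k := vscal (/ la) h).
  assert (Hk : vnorm k = 1).
  { unfold k. rewrite vnorm_scal, Rabs_pos_eq; [fold la; field; lra|].
    left; apply Rinv_0_lt_compat, Hla_pos. }
  (* [w + t h] lies on the segment from [w - t k] to [w + t k] *)
  set (al := (1 + la) / 2).
  replace (vadd w (vscal t h))
    with (vadd (vscal al (vadd w (vscal t k))) (vscal (1 - al) (vadd w (vscal t (vscal (-1) k)))))
    by (unfold k, al; vring [w; h]; field; auto).
  eapply Rle_trans; [apply vnorm_triangle|]. rewrite !vnorm_scal.
  rewrite (Rabs_pos_eq al), (Rabs_pos_eq (1 - al)) by (unfold al; lra).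
  pose proof (Hsphere k (Escal _ _ Hh) Hk).
  pose proof (Hsphere (vscal (-1) k) (Escal _ _ (Escal _ _ Hh))
                ltac:(rewrite vnorm_opp_scal; exact Hk)).
  assert (0 <= al <= 1) by (unfold al; lra). nra.
Qed.

Lemma near_unit_ball (x : X) eta :
  vnorm x <= 1 -> near E x eta -> exists e, E e /\ vnorm e <= 1 /\ vnorm (vsub x e) < 2 * eta.
Proof.
  destruct HE as [_ [_ Escal]]. intros Hx [e [He Hxe]].
  pose proof (vnorm_ge0 (vsub x e)).
  destruct (Rle_dec (vnorm e) 1) as [He1|He1].
  { exists e. split; [|split]; auto; lra. }
  apply Rnot_le_lt in He1. set (la := vnorm e) in *.
  exists (vscal (/ la) e). split; [auto|]. split.
  - rewrite vnorm_scal, Rabs_pos_eq; [fold la; right; field; lra|].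
    left; apply Rinv_0_lt_compat; lra.
  - assert (Hee : vnorm (vsub e (vscal (/ la) e)) = la - 1).
    { replace (vsub e (vscal (/ la) e)) with (vscal (1 - / la) e) by vring [e].
      rewrite vnorm_scal, Rabs_pos_eq; [fold la; field; lra|].
      assert (/ la < 1) by (rewrite <- Rinv_1; apply Rinv_lt_contravar; lra). lra. }
    pose proof (vnorm_sub_triangle x e (vscal (/ la) e)).
    pose proof (vnorm_le_sub e x) as Hex. rewrite vnorm_subC in Hex. fold la in Hex. lra.
Qed.

End UnitBall.

Section SmoothEstimate.
Context {X : NormedSpace} (p C : R).
Hypotheses (Hp : 1 < p) (HC : 0 < C)
  (Hmod : forall t, 0 <= t <= 1 -> asym_smooth_modulus X t <= C * rpow t p).
Context (xs : nat -> X).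
Hypotheses (Hxs : forall n, vnorm (xs n) <= 1) (Hwn : weakly_null xs).

Lemma unit_estimate_small (w : X) t :
  vnorm w = 1 -> 0 < t <= 1 ->
  eventually (fun n => vnorm (vsub w (vscal t (xs n))) <= 1 + (C + 2) * Rpower t p).
Proof.
  intros Hw Ht. set (tp := Rpower t p).
  assert (Htp : 0 < tp) by apply exp_pos.
  assert (Hmod_t : asym_smooth_modulus X t <= C * tp).
  { replace tp with (rpow t p) by (unfold rpow; destruct Rle_dec; [lra | reflexivity]).
    apply Hmod; lra. }
  destruct (asym_modulus_witness t ltac:(lra) w _ tp Hw Hmod_t Htp) as [E [HfE Hsphere]].
  assert (HE : subspace E) by apply HfE.
  destruct (finite_codim_dense_span E HfE) as [es Hdense].
  apply (eventually_mono _ _)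
    with (2 := weakly_null_eventually_near es E HE Hdense xs Hwn (tp / 2) ltac:(lra)).
  intros n Hnear. destruct (near_unit_ball E HE (xs n) _ (Hxs n) Hnear) as [e [He [He1 Hxe]]].
  assert (Hball : vnorm (vadd w (vscal t (vscal (-1) e))) <= 1 + C * tp + tp).
  { apply (ball_bound_of_sphere_bound E HE); auto.
    - pose proof (Rmult_le_pos _ _ (Rlt_le _ _ HC) (Rlt_le _ _ Htp)). lra.
    - apply HE, He.
    - rewrite vnorm_opp_scal. exact He1. }
  replace (vsub w (vscal t (xs n)))
    with (vadd (vadd w (vscal t (vscal (-1) e))) (vscal t (vsub e (xs n))))
    by vring [w; e; xs n].
  eapply Rle_trans; [apply vnorm_triangle|].
  rewrite vnorm_scal, Rabs_pos_eq, vnorm_subC by lra.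
  assert (t * vnorm (vsub (xs n) e) <= 1 * tp)
    by (apply Rmult_le_compat; try lra; apply vnorm_ge0).
  lra.
Qed.

Lemma unit_estimate_large (w : X) t n :
  vnorm w = 1 -> 1 < t -> vnorm (vsub w (vscal t (xs n))) <= 1 + (C + 2) * Rpower t p.
Proof.
  intros Hw Ht.
  assert (Htp : t <= Rpower t p).
  { rewrite <- (Rpower_1 t) at 1 by lra. apply Rle_Rpower; lra. }
  replace (vsub w (vscal t (xs n))) with (vadd w (vscal (- t) (xs n))) by vring [w; xs n].
  eapply Rle_trans; [apply vnorm_triangle|].
  rewrite vnorm_scal, Rabs_Ropp, Rabs_pos_eq by lra.
  pose proof (Hxs n). assert (t * vnorm (xs n) <= t) by nra. nra.
Qed.

Lemma scaled_estimate (v : X) t :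
  0 < t ->
  eventually (fun n => vnorm (vsub v (vscal (t * vnorm v) (xs n)))
                       <= (1 + (C + 2) * Rpower t p) * vnorm v).
Proof.
  intros Ht. set (V := vnorm v). pose proof (vnorm_ge0 v) as HV. fold V in HV.
  destruct (Req_dec V 0) as [HV0|HV0].
  { exists O. intros n _. apply vnorm_eq0 in HV0 as Hv.
    replace (vsub v (vscal (t * V) (xs n))) with (@vzero X)
      by (rewrite Hv, HV0; vring [xs n]).
    rewrite vnorm_zero, HV0. lra. }
  set (w := vscal (/ V) v).
  assert (Hw : vnorm w = 1).
  { unfold w. rewrite vnorm_scal, Rabs_pos_eq; [fold V; field; lra|].
    left; apply Rinv_0_lt_compat; lra. }
  assert (Hunit : eventually (fun n => vnorm (vsub w (vscal t (xs n)))
                                      <= 1 + (C + 2) * Rpower t p)).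
  { destruct (Rle_dec t 1) as [Ht1|Ht1].
    - apply unit_estimate_small; auto; lra.
    - exists O. intros m _. apply unit_estimate_large; auto; lra. }
  apply (eventually_mono _ _) with (2 := Hunit). intros n Hn.
  replace (vsub v (vscal (t * V) (xs n))) with (vscal V (vsub w (vscal t (xs n))))
    by (unfold w; vring [v; xs n]; field; lra).
  rewrite vnorm_scal, Rabs_pos_eq by lra. rewrite Rmult_comm.
  apply Rmult_le_compat_r; lra.
Qed.

End SmoothEstimate.

Theorem lemma5p1 :
  forall (p : R), 1 < p ->
  forall (X : NormedSpace), complete X -> asym_p_unif_smooth X p ->
  exists c : R, c > 0 /\
    forall (x y : X) (delta : R), delta > 0 ->
    forall xs : nat -> X, (forall n, in_unit_ball (xs n)) -> weakly_null xs ->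
    exists n0 : nat, forall n : nat, (n > n0)%nat ->
      Mid x y (c * delta)
        (vadd (vscal (/ 2) (vadd x y))
              (vscal (Rpower delta (/ p) * vnorm (vscal (/ 2) (vsub x y))) (xs n))).
Proof.
  intros p Hp X _ [C [HC Hmod]]. exists (C + 2). split; [lra|].
  intros x y delta Hdelta xs Hxs Hwn.
  set (t := Rpower delta (/ p)). assert (Ht : 0 < t) by apply exp_pos.
  assert (Htp : Rpower t p = delta).
  { unfold t. rewrite Rpower_mult. replace (/ p * p) with 1 by (field; lra).
    apply Rpower_1; lra. }
  set (v := vscal (/ 2) (vsub x y)).
  destruct (eventually_and _ _ (scaled_estimate p C Hp HC Hmod xs Hxs Hwn v t Ht)
              (scaled_estimate p C Hp HC Hmod xs Hxs Hwn (vscal (-1) v) t Ht)) as [N HN].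
  exists N. intros n Hn. destruct (HN n ltac:(lia)) as [Hx Hy].
  rewrite vnorm_opp_scal, Htp in Hy. rewrite Htp in Hx.
  unfold Mid. replace (/ 2 * (1 + (C + 2) * delta) * vnorm (vsub x y))
    with ((1 + (C + 2) * delta) * vnorm v)
    by (unfold v; rewrite vnorm_scal, Rabs_pos_eq by lra; ring).
  apply Rmax_lub.
  - replace (vsub x _) with (vsub v (vscal (t * vnorm v) (xs n)))
      by (unfold v; vring [x; y; xs n]).
    exact Hx.
  - replace (vsub y _) with (vsub (vscal (-1) v) (vscal (t * vnorm v) (xs n)))
      by (unfold v; vring [x; y; xs n]).
    exact Hy.
Qed.
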